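(* For all integers $n\ge 2$ and $M\ge 1$, $C_{CD}(n,M)\ge C_{AD}(n,M)\ge \frac{n}{2}\log_2 M$.
   Context: There are $n$ nodes labeled $1,\dots,n$; node $i$ privately holds an input $x_i\in\{1,\dots,M\}$. Communication is over private point-to-point links of a fully connected synchronous network. A deterministic protocol $P$ is a fixed finite schedule of steps $l=1,\dots,L(P)$; in step $l$ a prescribed node $T_l$ sends to a prescribed node $R_l\neq T_l$ one symbol $f_l(x_{T_l},T_l^+(l))$, where $T_l^+(l)$ is the sequence of symbols $T_l$ has received in steps $1,\dots,l-1$; only $R_l$ receives it. Its complexity is $C(P)=\sum_{l}\log_2 S_l(P)$, with $S_l(P)$ the number of distinct values of the step-$l$ symbol over all inputs in $\{1,\dots,M\}^n$. At the end each node $i$ outputs a bit $EQ_i$ depending on $x_i$ and the symbols it received. $P$ solves MEQ-AD$(n,M)$ if for every input, $EQ_1=\cdots=EQ_n=0$ iff $x_1=\cdots=x_n$; $P$ solves MEQ-CD$(n,M)$ if for every input, $EQ_n=0$ iff $x_1=\cdots=x_n$. $C_{AD}(n,M)$ and $C_{CD}(n,M)$ are the infima of $C(P)$ over protocols solving MEQ-AD$(n,M)$, respectively MEQ-CD$(n,M)$. *)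

From HB Require Import structures.
From mathcomp Require Import all_boot all_order all_algebra.
From mathcomp Require Import classical_sets reals exp.
Set Implicit Arguments. Unset Strict Implicit. Unset Printing Implicit Defensive.
Import Order.TTheory GRing.Theory Num.Theory.

(* Nodes 1..n are represented by 'I_n (node k+1 <-> ordinal k);
   inputs 1..M are represented by 'I_M (value v+1 <-> ordinal v).
   Symbols are natural numbers (w.l.o.g.: only finitely many values occur).
   Steps l = 1..L are represented by 0..L-1. *)
Record protocol (n M : nat) := Protocol {
  plen : nat;
  psend : nat -> 'I_n;
  precv : nat -> 'I_n;
  pmsg : nat -> 'I_M -> seq nat -> nat;        (* f_l (x_{T_l}, T_l^+(l)) *)
  pout : 'I_n -> 'I_M -> seq nat -> bool;      (* EQ_i (x_i, symbols received) *)
  pdistinct : forall l, l < plen -> psend l != precv l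
}.

Section Exec.
Variables (n M : nat) (P : protocol n M).

Definition received (h : seq nat) (i : 'I_n) : seq nat :=
  [seq nth 0%N h k | k <- iota 0 (size h) & precv P k == i].

Fixpoint history (x : {ffun 'I_n -> 'I_M}) (l : nat) : seq nat :=
  match l with
  | 0 => [::]
  | l'.+1 => let h := history x l' in
             rcons h (pmsg P l' (x (psend P l')) (received h (psend P l')))
  end.

Definition symbol (x : {ffun 'I_n -> 'I_M}) (l : nat) : nat :=
  nth 0%N (history x l.+1) l.

Definition EQ (x : {ffun 'I_n -> 'I_M}) (i : 'I_n) : bool :=
  pout P i (x i) (received (history x (plen P)) i).

Definition Snum (l : nat) : nat :=
  size (undup [seq symbol x l | x <- enum {ffun 'I_n -> 'I_M}]).

Definition log2 {R : realType} (r : R) : R := (ln r / ln 2)%R.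

Definition cost (R : realType) : R :=
  (\sum_(l < plen P) log2 ((Snum l)%:R : R))%R.

Definition all_equal (x : {ffun 'I_n -> 'I_M}) : Prop :=
  forall i j : 'I_n, x i = x j.

Definition solves_AD : Prop :=
  forall x, (forall i, EQ x i = false) <-> all_equal x.

(* node n is the ordinal with value n-1 *)
Definition solves_CD : Prop :=
  forall x (i : 'I_n), val i = n.-1 -> (EQ x i = false <-> all_equal x).

End Exec.

Definition C_AD (R : realType) (n M : nat) : R :=
  inf [set c : R | exists P : protocol n M, solves_AD P /\ c = cost P R].

Definition C_CD (R : realType) (n M : nat) : R :=
  inf [set c : R | exists P : protocol n M, solves_CD P /\ c = cost P R].

From mathcomp Require Import all_boot all_order all_algebra.
From mathcomp Require Import classical_sets reals exp.
Set Implicit Arguments. Unset Strict Implicit. Unset Printing Implicit Defensive.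
Import Order.TTheory GRing.Theory Num.Theory.

(* Cut and paste: if the constant inputs a and b produce the same symbols on
   every step incident to node i, the input that is b at i and a elsewhere
   looks like b to node i and like a to every other node, so all nodes accept
   it and a = b.  Hence the symbols on the steps incident to a node take at
   least M values, i.e. their log-costs sum to at least log2 M.  Summing over
   the n nodes counts every step twice.  A CD protocol becomes an AD protocol
   of the same cost when the other nodes always output 0. *)

Section SeqProduct.
Variable T : eqType.

Definition seq_product (us : seq (seq T)) : seq (seq T) :=
  foldr (fun u ss => [seq x :: s | x <- u, s <- ss]) [:: [::]] us.

Lemma size_seq_product us : size (seq_product us) = \prod_(u <- us) size u.
Proof. by elim: us => [|u us IH]; rewrite ?big_nil ?big_cons //= size_allpairs IH. Qed.

Lemma mem_seq_product us s : all2 (fun x u => x \in u) s us -> s \in seq_product us.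
Proof.
elim: us s => [|u us IH] [|x s] //= /andP[xu /IH sus].
exact: (allpairs_f (fun x s => x :: s)).
Qed.

End SeqProduct.

Lemma card_le_prod_ranges (A : finType) (I T : eqType) (r : seq I)
    (f : I -> A -> T) (U : I -> seq T) :
  injective (fun a => [seq f i a | i <- r]) -> (forall i a, f i a \in U i) ->
  #|A| <= \prod_(i <- r) size (U i).
Proof.
move=> f_inj fU; rewrite cardE -(size_map (fun a => [seq f i a | i <- r])).
rewrite -(big_map U predT size) -size_seq_product.
apply: uniq_leq_size; first by rewrite (map_inj_uniq f_inj) enum_uniq.
move=> _ /mapP[a _ ->]; apply: mem_seq_product.
by elim: r {f_inj} => //= i r ->; rewrite fU.
Qed.

Section Execution.
Variables (n M : nat) (P : protocol n M).
Implicit Types (x y : {ffun 'I_n -> 'I_M}) (i : 'I_n).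

Definition received_symbols x i l :=
  [seq symbol P x k | k <- iota 0 l & precv P k == i].

Lemma size_history x l : size (history P x l) = l.
Proof. by elim: l => //= l IH; rewrite size_rcons IH. Qed.

Lemma history_mkseq x l : history P x l = mkseq (symbol P x) l.
Proof.
elim: l => // l IH; rewrite mkseqS -IH /symbol /=.
by rewrite nth_rcons size_history ltnn eqxx.
Qed.

Lemma received_history x i l : received P (history P x l) i = received_symbols x i l.
Proof.
rewrite history_mkseq /received size_mkseq; apply/eq_in_map => k.
by rewrite mem_filter mem_iota add0n => /and3P[_ _ kl]; rewrite nth_mkseq.
Qed.

Lemma symbolE x l :
  symbol P x l = pmsg P l (x (psend P l)) (received_symbols x (psend P l) l).
Proof.
by rewrite /symbol /= nth_rcons size_history ltnn eqxx received_history.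
Qed.

Lemma EQE x i : EQ P x i = pout P i (x i) (received_symbols x i (plen P)).
Proof. by rewrite /EQ received_history. Qed.

Lemma eq_received_symbols x y i l :
    (forall k, k < l -> precv P k = i -> symbol P x k = symbol P y k) ->
  received_symbols x i l = received_symbols y i l.
Proof.
move=> xy; apply/eq_in_map => k.
by rewrite mem_filter mem_iota add0n => /andP[/eqP rk /andP[_ kl]]; apply: xy.
Qed.

End Execution.

Section CutAndPaste.
Variables (n M : nat) (P : protocol n M).
Implicit Types (x y : {ffun 'I_n -> 'I_M}) (i j : 'I_n).

Definition incident i l := (psend P l == i) || (precv P l == i).

Definition splice x y i : {ffun 'I_n -> 'I_M} :=
  [ffun j => if j == i then y i else x j].

Section Agreement.
Variables (x y : {ffun 'I_n -> 'I_M}) (i : 'I_n).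
Hypothesis xy_incident :
  forall l, l < plen P -> incident i l -> symbol P x l = symbol P y l.

Lemma received_symbols_agree l :
  l <= plen P -> received_symbols P x i l = received_symbols P y i l.
Proof.
move=> lP; apply: eq_received_symbols => k kl rk.
by apply: xy_incident; [exact: leq_trans kl lP | rewrite /incident rk eqxx orbT].
Qed.

Lemma symbol_splice l : l < plen P -> symbol P (splice x y i) l = symbol P x l.
Proof.
elim/ltn_ind: l => l IH lP.
rewrite symbolE (eq_received_symbols (y := x)); last first.
  by move=> k kl _; apply: IH => //; exact: ltn_trans kl lP.
rewrite ffunE; case: eqP => [si | _]; last by rewrite -symbolE.
rewrite xy_incident ?(symbolE _ y) ?si ?received_symbols_agree ?(ltnW lP) //.
by rewrite /incident si eqxx.
Qed.

Lemma EQ_splice j : EQ P (splice x y i) j = if j == i then EQ P y i else EQ P x j.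
Proof.
rewrite EQE (eq_received_symbols (y := x)) => [|k kl _]; last exact: symbol_splice.
rewrite ffunE; case: eqP => [-> | _]; last by rewrite -EQE.
by rewrite EQE received_symbols_agree.
Qed.

End Agreement.

Definition const_input (a : 'I_M) : {ffun 'I_n -> 'I_M} := [ffun=> a].

Definition incident_steps i := [seq l <- index_iota 0 (plen P) | incident i l].

Lemma solves_AD_incident_inj i : 1 < n -> solves_AD P ->
  injective (fun a => [seq symbol P (const_input a) l | l <- incident_steps i]).
Proof.
move=> n_gt1 HP a b /eq_in_map ab.
have /card_gt0P[j /= ji] : 0 < #|predC1 i|.
  by rewrite cardC1 card_ord -ltnS prednK // ltnW.
have accepted c : forall j', EQ P (const_input c) j' = false.
  by apply/(HP (const_input c)) => ? ?; rewrite !ffunE.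
have /(HP (splice (const_input a) (const_input b) i)) /(_ i j) : forall j',
    EQ P (splice (const_input a) (const_input b) i) j' = false.
  move=> j'; rewrite EQ_splice ?accepted ?if_same // => l lP il.
  by apply: ab; rewrite mem_filter il mem_index_iota.
by rewrite !ffunE eqxx (negbTE ji).
Qed.

End CutAndPaste.

Section Counting.
Variables (n M : nat) (P : protocol n M).

Lemma Snum_gt0 l : 0 < M -> 0 < Snum P l.
Proof.
move=> M_gt0; have : symbol P (const_input n (Ordinal M_gt0)) l \in
    undup [seq symbol P x l | x <- enum {ffun 'I_n -> 'I_M}].
  by rewrite mem_undup; apply: map_f; rewrite mem_enum.
by rewrite /Snum; case: (undup _).
Qed.

Lemma M_le_prod_Snum i : 1 < n -> solves_AD P ->
  M <= \prod_(l <- incident_steps P i) Snum P l.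
Proof.
move=> n_gt1 HP; rewrite -[X in X <= _]card_ord /Snum.
apply: (card_le_prod_ranges (solves_AD_incident_inj (i := i) n_gt1 HP)
  (U := fun l => undup [seq symbol P x l | x <- enum {ffun 'I_n -> 'I_M}])) => l a.
by rewrite mem_undup; apply: map_f; rewrite mem_enum.
Qed.

Lemma card_incident l : l < plen P -> #|[pred i | incident P i l]| = 2.
Proof.
move=> lP; transitivity #|[set psend P l; precv P l]|.
  by apply: eq_card => i; rewrite !inE /incident ![_ == i]eq_sym.
by rewrite cards2 (pdistinct lP).
Qed.

Lemma sum_incident_steps (V : nmodType) (g : nat -> V) :
  (\sum_(i < n) \sum_(l <- incident_steps P i) g l = (\sum_(l < plen P) g l) *+ 2)%R.
Proof.
under eq_bigr => i _ do rewrite big_filter big_mkord big_mkcond.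
rewrite exchange_big -sumrMnl; apply: eq_bigr => l _.
by rewrite -big_mkcond sumr_const card_incident.
Qed.

End Counting.

Local Open Scope ring_scope.

Lemma ln_prod (R : realType) (I : Type) (r : seq I) (P : pred I) (f : I -> R) :
  (forall i, P i -> 0 < f i) ->
  ln (\prod_(i <- r | P i) f i) = \sum_(i <- r | P i) ln (f i).
Proof.
move=> f_gt0; pose K (s p : R) := 0 < p /\ s = ln p.
suff [_ ->] : K (\sum_(i <- r | P i) ln (f i)) (\prod_(i <- r | P i) f i) by [].
elim/big_rec2: _ => [|i s p Pi [p_gt0 ->]]; first by split; rewrite ?ln1.
by split; rewrite ?lnM ?posrE ?mulr_gt0 ?f_gt0.
Qed.

Section CostBound.
Variables (R : realType) (n M : nat) (P : protocol n M).
Hypotheses (n_gt1 : (1 < n)%N) (M_gt0 : (0 < M)%N) (HP : solves_AD P).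

Lemma ln_le_sum_incident i :
  ln (M%:R : R) <= \sum_(l <- incident_steps P i) ln (Snum P l)%:R.
Proof.
rewrite -ln_prod => [|l _]; last by rewrite ltr0n Snum_gt0.
rewrite ler_ln ?posrE -?natr_prod ?ltr0n ?ler_nat ?M_le_prod_Snum //.
by rewrite prodn_gt0 // => l; exact: Snum_gt0.
Qed.

Lemma cost_ge_solves_AD : n%:R / 2 * log2 (M%:R : R) <= cost P R.
Proof.
have sum_ln : n%:R * ln (M%:R : R) <= (\sum_(l < plen P) ln (Snum P l)%:R) *+ 2.
  rewrite -(sum_incident_steps P (fun l => ln (Snum P l)%:R : R)).
  rewrite mulr_natl -[in X in _ *+ X](card_ord n) -sumr_const.
  by apply: ler_sum => i _; exact: ln_le_sum_incident.
rewrite /cost /log2 -mulr_suml mulrA ler_pM2r ?invr_gt0 ?ln_gt0 ?ltr1n //.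
by rewrite mulrAC ler_pdivrMr ?mulr_natr.
Qed.

End CostBound.

Section Gather.
Variables (n' M : nat).

Lemma gather_distinct l : (l < n')%N -> (inord l : 'I_n'.+1) != ord_max.
Proof.
by move=> ln; rewrite -val_eqE /= inordK ?(ltn_eqF ln) // ltnW.
Qed.

Definition gather : protocol n'.+1 M :=
  @Protocol n'.+1 M n' (fun l => inord l) (fun _ => ord_max)
    (fun _ v _ => val v) (fun _ v r => ~~ all (pred1 (val v)) r) gather_distinct.

Lemma solves_CD_gather : solves_CD gather.
Proof.
move=> x i i_last; have -> : i = ord_max by apply: val_inj.
rewrite EQE /received_symbols /= (eq_filter (a2 := xpredT)) => [|k]; last exact: eqxx.
rewrite filter_predT; split.
- move=> /negbFE/allP x_last.
  suff eq_last j : x j = x ord_max by move=> j k; rewrite !eq_last.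
  have [jn | ] := ltnP j n'; last first.
    move=> nj; have -> // : j = ord_max.
    by apply/val_inj/eqP; rewrite /= eqn_leq nj -ltnS ltn_ord.
  have /x_last : symbol gather x j \in [seq symbol gather x k | k <- iota 0 n'].
    by apply: map_f; rewrite mem_iota.
  by rewrite symbolE /= inord_val => /eqP /val_inj.
- move=> x_eq; apply/negbF/allP => _ /mapP[k _ ->].
  by rewrite symbolE /= (x_eq (inord k) ord_max).
Qed.

End Gather.

Lemma exists_solves_CD n M : (0 < n)%N -> exists P : protocol n M, solves_CD P.
Proof. by case: n => // n' _; exists (gather n' M); exact: solves_CD_gather. Qed.

Definition cd_to_ad n M (P : protocol n M) : protocol n M :=
  @Protocol n M (plen P) (psend P) (precv P) (pmsg P)
    (fun i v r => (val i == n.-1) && pout P i v r) (@pdistinct _ _ P).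

Lemma EQ_cd_to_ad n M (P : protocol n M) x i :
  EQ (cd_to_ad P) x i = (val i == n.-1) && EQ P x i.
Proof. by []. Qed.

Lemma solves_AD_cd_to_ad n M (P : protocol n M) :
  (0 < n)%N -> solves_CD P -> solves_AD (cd_to_ad P).
Proof.
move=> n_gt0 HP x; have last_lt : (n.-1 < n)%N by rewrite prednK.
split => [EQ_false | x_eq i].
  apply/(HP x (Ordinal last_lt)) => //.
  by rewrite -(EQ_false (Ordinal last_lt)) EQ_cd_to_ad eqxx.
by rewrite EQ_cd_to_ad; case: eqP => //= i_last; apply/(HP x i i_last).
Qed.

Local Open Scope classical_set_scope.

Theorem mainTheorem6 (R : realType) (n M : nat) :
  (2 <= n)%N -> (1 <= M)%N ->
  C_AD R n M <= C_CD R n M /\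
  (n%:R / 2) * log2 (M%:R : R) <= C_AD R n M.
Proof.
move=> n_gt1 M_gt0; have n_gt0 : (0 < n)%N by exact: ltnW.
rewrite /C_AD /C_CD.
set AD := [set c : R | exists P : protocol n M, solves_AD P /\ c = cost P R].
set CD := [set c : R | exists P : protocol n M, solves_CD P /\ c = cost P R].
have AD_lb : lbound AD ((n%:R / 2) * log2 (M%:R : R)).
  by move=> _ [P [HP ->]]; exact: cost_ge_solves_AD.
have CD_ne : CD !=set0.
  by have [P HP] := exists_solves_CD M n_gt0; exists (cost P R), P.
have CD_sub_AD : CD `<=` AD.
  by move=> _ [P [HP ->]]; exists (cd_to_ad P); split; first exact: solves_AD_cd_to_ad.
split; last by apply: lb_le_inf AD_lb; case: CD_ne => c /CD_sub_AD; exists c.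
apply: lb_le_inf CD_ne _ => c /CD_sub_AD ADc.
by apply: ge_inf ADc; exists ((n%:R / 2) * log2 (M%:R : R)).
Qed.
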